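(* Let $M,N,K$ be positive integers, $s$ a non-negative integer, $X\in\mathbb{R}^{N\times K}$ an $s$-row sparse matrix, and $A\in\mathbb{R}^{M\times N}$. Let $Y=AX$ and $r=\operatorname{rank}(Y)$, and suppose the map $Z\mapsto AZ$ is injective on $\Sigma_{s,r}$. Then: (i) $Y$ can be written as a product $Y=VU$ where $V\in\mathbb{R}^{M\times r}$ with $\operatorname{rank}(V)=r$ and $U\in\mathbb{R}^{r\times K}$ with $UU^T=I_r$ (the $r\times r$ identity matrix); (ii) for any such factorization $Y=VU$, the problem $\operatorname{argmin}_{Z\in\mathbb{R}^{N\times r}}\|Z\|_0$ subject to $AZ=V$ has a unique solution $W\in\mathbb{R}^{N\times r}$, and this $W$ is $s$-row sparse and has full column rank; (iii) $X=WU$.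
   Context: A matrix in $\mathbb{R}^{N\times K}$ is called $s$-row sparse if at most $s$ of its rows are non-zero. $\Sigma_{s,r}$ denotes the set of all $s$-row sparse matrices in $\mathbb{R}^{N\times K}$ of rank at least $r$. For a matrix $Z$, $\|Z\|_0$ denotes the number of non-zero rows of $Z$. *)

From HB Require Import structures.
From mathcomp Require Import all_boot all_order all_algebra.
From mathcomp Require Import reals.
Set Implicit Arguments. Unset Strict Implicit. Unset Printing Implicit Defensive.
Import GRing.Theory Num.Theory.
Local Open Scope ring_scope.

Definition nzrows (R : ringType) (m n : nat) (Z : 'M[R]_(m, n)) : nat :=
  #|[set i : 'I_m | row i Z != 0]|.

Definition row_sparse (R : ringType) (m n : nat) (s : nat) (Z : 'M[R]_(m, n)) : Prop :=
  (nzrows Z <= s)%N.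

Definition Sigma (F : fieldType) (m n : nat) (s r : nat) (Z : 'M[F]_(m, n)) : Prop :=
  row_sparse s Z /\ (r <= \rank Z)%N.

Definition l0_argmin (R : ringType) (m n k : nat) (A : 'M[R]_(m, n))
  (V : 'M[R]_(m, k)) (W : 'M[R]_(n, k)) : Prop :=
  A *m W = V /\ forall Z : 'M[R]_(n, k), A *m Z = V -> (nzrows W <= nzrows Z)%N.

From HB Require Import structures.
From mathcomp Require Import all_boot all_order all_algebra.
From mathcomp Require Import reals.
Set Implicit Arguments. Unset Strict Implicit. Unset Printing Implicit Defensive.
Import Order.TTheory GRing.Theory Num.Theory.
Local Open Scope ring_scope.

(* Gram-Schmidt gives Y = V U with U having orthonormal rows spanning the row
   space of Y, so V = Y U^T has rank r.  Given any such factorization, if Z is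
   an s-sparse solution of A Z = V then Z U is s-sparse, has rank at least
   rank (A Z U) = rank Y = r, and A (Z U) = Y = A X; injectivity on
   Sigma_{s,r} forces Z U = X, hence Z = Z U U^T = X U^T.  So W := X U^T is
   the only s-sparse solution; as it is itself s-sparse, it is the unique
   l0-minimizer, and X = W U. *)

Lemma nzrows_mulmx (R : ringType) m n p (Z : 'M[R]_(m, n)) (P : 'M[R]_(n, p)) :
  (nzrows (Z *m P) <= nzrows Z)%N.
Proof.
apply: subset_leq_card; apply/subsetP => i; rewrite !inE row_mul.
by apply: contra => /eqP ->; rewrite mul0mx.
Qed.

Lemma l0_argmin_unique_of_sparse (R : ringType) m n k s
    (A : 'M[R]_(m, n)) (V : 'M[R]_(m, k)) (W : 'M[R]_(n, k)) :
  A *m W = V -> row_sparse s W ->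
  (forall Z, A *m Z = V -> row_sparse s Z -> Z = W) ->
  l0_argmin A V W /\ (forall W', l0_argmin A V W' -> W' = W).
Proof.
move=> AW sW sparse_uniq; split.
  split=> // Z AZ; rewrite leqNgt; apply/negP => ltZW.
  have sZ : row_sparse s Z by apply: leq_trans (ltnW ltZW) sW.
  by move: ltZW; rewrite (sparse_uniq Z AZ sZ) ltnn.
move=> W' [AW' minW']; apply: sparse_uniq => //.
exact: leq_trans (minW' W AW) sW.
Qed.

Lemma mulmx_trmx_row_gt0 (R : realDomainType) n (v : 'rV[R]_n) :
  v != 0 -> 0 < (v *m v^T) 0 0.
Proof.
move=> v_neq0; rewrite mxE; under eq_bigr do rewrite mxE -expr2.
rewrite lt_def sumr_ge0 ?andbT => [|j _]; last exact: sqr_ge0.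
rewrite psumr_eq0 => [|j _]; last exact: sqr_ge0.
apply: contra v_neq0 => /allP sq0; apply/eqP/rowP => j.
by have := sq0 j (mem_index_enum _); rewrite sqrf_eq0 mxE => /eqP.
Qed.

Section Orthonormal.

Variable R : rcfType.

Lemma normalize_row n (v : 'rV[R]_n) :
  v != 0 -> exists2 c : R, c != 0 & (c *: v) *m (c *: v)^T = 1%:M.
Proof.
move=> v_neq0; set q := (v *m v^T) 0 0.
have q_gt0 : 0 < q by exact: mulmx_trmx_row_gt0.
have sqrt_neq0 : Num.sqrt q != 0 by rewrite gt_eqF ?sqrtr_gt0.
exists (Num.sqrt q)^-1; first by rewrite invr_eq0.
rewrite linearZ /= -scalemxAl -scalemxAr scalerA (mx11_scalar (v *m v^T)).
rewrite scale_scalar_mx -/q -expr2 exprVn sqr_sqrtr ?ltW // mulVf //.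
by rewrite gt_eqF.
Qed.

Lemma orthonormal_col_mx n k (u : 'rV[R]_n) (U : 'M[R]_(k, n)) :
  u *m u^T = 1%:M -> U *m U^T = 1%:M -> u *m U^T = 0 ->
  col_mx u U *m (col_mx u U)^T = 1%:M.
Proof.
move=> uu UU uU; rewrite tr_col_mx mul_col_row uu UU uU.
have -> : U *m u^T = 0 by rewrite -(trmxK U) -trmx_mul uU trmx0.
by rewrite -(scalar_mx_block 1 k (1 : R)).
Qed.

Lemma orthonormal_proj m n k (Y : 'M[R]_(m, n)) (U : 'M[R]_(k, n)) :
  U *m U^T = 1%:M -> (Y <= U)%MS -> Y *m U^T *m U = Y.
Proof. by move=> UU /submxP[D ->]; rewrite -(mulmxA D) UU mulmx1. Qed.

Lemma row_free_orthonormal n k (B : 'M[R]_(k, n)) :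
  row_free B -> exists2 U : 'M[R]_(k, n), U *m U^T = 1%:M & (B <= U)%MS.
Proof.
elim: k B => [|k IH] B freeB.
  by exists 0; rewrite ?flatmx0 ?sub0mx.
set w := usubmx (B : 'M_(1 + k, n)); set b := dsubmx (B : 'M_(1 + k, n)).
have BE : B = col_mx w b by rewrite vsubmxK.
rewrite BE in freeB *.
have rank_wb : \rank (col_mx w b) = k.+1 by apply/eqP.
have freeb : row_free b.
  rewrite /row_free eqn_leq rank_leq_row -ltnS -rank_wb -addsmxE.
  apply: leq_trans (mxrank_adds_leqif w b).1 _.
  by rewrite -[(\rank b).+1]add1n leq_add2r rank_leq_row.
have [U' U'U' bU'] := IH b freeb.
set v := w - w *m U'^T *m U'.
have v_neq0 : v != 0.
  apply: contraTneq (rank_leq_row U') => /eqP; rewrite subr_eq0 => /eqP wE.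
  have wbU' : (col_mx w b <= U')%MS by rewrite col_mx_sub {1}wE submxMl bU'.
  by rewrite -ltnNge -rank_wb mxrankS.
have vU' : v *m U'^T = 0 by rewrite mulmxBl -!mulmxA U'U' mulmx1 subrr.
have [c c_neq0 uu] := normalize_row v_neq0.
exists (col_mx (c *: v) U').
  by apply: orthonormal_col_mx; rewrite // -scalemxAl vU' scaler0.
have u_sub : (c *: v <= col_mx (c *: v) U')%MS by rewrite -addsmxE addsmxSl.
have U'_sub : (U' <= col_mx (c *: v) U')%MS by rewrite -addsmxE addsmxSr.
rewrite (@col_mx_sub _ 1 k) (submx_trans bU') // andbT.
rewrite -[w](subrK (w *m U'^T *m U')) -/v addmx_sub //.
  by rewrite -{1}[v](scalerK c_neq0) scalemx_sub.
exact: submx_trans (submxMl _ _) U'_sub.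
Qed.

Lemma orthonormal_factorization m n (Y : 'M[R]_(m, n)) :
  exists (V : 'M[R]_(m, \rank Y)) (U : 'M[R]_(\rank Y, n)),
    \rank V = \rank Y /\ U *m U^T = 1%:M /\ Y = V *m U.
Proof.
have [U UU baseU] := row_free_orthonormal (row_base_free Y).
have YU : (Y <= U)%MS by rewrite -(eq_row_base Y).
have YE : Y *m U^T *m U = Y by exact: orthonormal_proj.
exists (Y *m U^T), U; split=> //.
apply/eqP; rewrite eqn_leq mxrankM_maxl /=.
by rewrite -{1}YE mxrankM_maxl.
Qed.

End Orthonormal.

Section SparseRecovery.

Variables (F : fieldType) (m n k r s : nat).
Variables (A : 'M[F]_(m, n)) (X : 'M[F]_(n, k)).
Variables (V : 'M[F]_(m, r)) (U : 'M[F]_(r, k)).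
Hypotheses (UU : U *m U^T = 1%:M) (AXE : A *m X = V *m U).
Hypothesis sparseX : row_sparse s X.
Hypothesis A_inj : forall Z1 Z2 : 'M[F]_(n, k),
  Sigma s (\rank (A *m X)) Z1 -> Sigma s (\rank (A *m X)) Z2 ->
  A *m Z1 = A *m Z2 -> Z1 = Z2.

Lemma sparse_solution_mulmx Z : A *m Z = V -> row_sparse s Z -> Z *m U = X.
Proof.
move=> AZ sparseZ; have AZU : A *m (Z *m U) = A *m X by rewrite mulmxA AZ.
apply: (A_inj _ _ AZU); last by split=> //; exact: mxrankM_maxr.
split; first exact: leq_trans (nzrows_mulmx _ _) sparseZ.
by rewrite -AZU mxrankM_maxr.
Qed.

Lemma sparse_solutionE Z : A *m Z = V -> row_sparse s Z -> Z = X *m U^T.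
Proof.
by move=> AZ sparseZ; rewrite -(sparse_solution_mulmx AZ sparseZ) -mulmxA UU mulmx1.
Qed.

Lemma mulmx_trmx_solution : A *m (X *m U^T) = V.
Proof. by rewrite mulmxA AXE -mulmxA UU mulmx1. Qed.

End SparseRecovery.

Theorem theorem4 (R : realType) (M N K s : nat)
  (X : 'M[R]_(N, K)) (A : 'M[R]_(M, N)) :
  (0 < M)%N -> (0 < N)%N -> (0 < K)%N ->
  row_sparse s X ->
  (forall Z1 Z2 : 'M[R]_(N, K),
      Sigma s (\rank (A *m X)) Z1 -> Sigma s (\rank (A *m X)) Z2 ->
      A *m Z1 = A *m Z2 -> Z1 = Z2) ->
  (exists (V : 'M[R]_(M, \rank (A *m X))) (U : 'M[R]_(\rank (A *m X), K)),
      \rank V = \rank (A *m X) /\ U *m U^T = 1%:M /\ A *m X = V *m U)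
  /\
  (forall (V : 'M[R]_(M, \rank (A *m X))) (U : 'M[R]_(\rank (A *m X), K)),
      \rank V = \rank (A *m X) -> U *m U^T = 1%:M -> A *m X = V *m U ->
      exists W : 'M[R]_(N, \rank (A *m X)),
        l0_argmin A V W
        /\ (forall W' : 'M[R]_(N, \rank (A *m X)), l0_argmin A V W' -> W' = W)
        /\ row_sparse s W
        /\ \rank W = \rank (A *m X)
        /\ X = W *m U).
Proof.
move=> _ _ _ sparseX A_inj; split; first exact: orthonormal_factorization.
move=> V U rankV UU AXE.
have AW := mulmx_trmx_solution UU AXE.
have sparseW : row_sparse s (X *m U^T) by apply: leq_trans (nzrows_mulmx _ _) _.
have [argminW uniqW] := l0_argmin_unique_of_sparse AW sparseW
  (sparse_solutionE UU AXE sparseX A_inj).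
exists (X *m U^T); do !split=> //.
  apply/eqP; rewrite eqn_leq rank_leq_col -{1}rankV -AW.
  exact: mxrankM_maxr.
by rewrite (sparse_solution_mulmx AXE sparseX A_inj AW sparseW).
Qed.
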